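(* Let $3 \leq s \leq t$ be integers. Let $G$ be a graph and $V(G) = A \cup B$ a partition of its vertex set. If $G[A]$ is $K_{2,2}$-free, $G[B]$ is $K_{2,2}$-free, and $G(A,B)$ is $K_{s,t}$-free, then $G$ is $K_{s+1,t+1}$-free.
   Context: $G[A]$ is the subgraph induced by $A$; $G(A,B)$ is the spanning subgraph of $G$ whose edges are those of $G$ with one endpoint in $A$ and the other in $B$. A graph is $F$-free if it has no subgraph isomorphic to $F$. *)

From mathcomp Require Import all_boot.
Set Implicit Arguments. Unset Strict Implicit. Unset Printing Implicit Defensive.

Definition simple_graph (V : finType) (e : rel V) : Prop :=
  symmetric e /\ irreflexive e.

Definition has_Kst (V : finType) (e : rel V) (s t : nat) : Prop :=
  exists X Y : {set V},
    [/\ [disjoint X & Y], #|X| = s, #|Y| = t &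
        forall x y, x \in X -> y \in Y -> e x y].

Definition Kst_free (V : finType) (e : rel V) (s t : nat) : Prop :=
  ~ has_Kst e s t.

Definition induced {V : finType} (e : rel V) (A : {set V}) : rel {x : V | x \in A} :=
  fun x y => e (val x) (val y).

Definition cross (V : finType) (e : rel V) (A B : {set V}) : rel V :=
  fun x y => e x y && (((x \in A) && (y \in B)) || ((x \in B) && (y \in A))).
Arguments induced {V} e A _ _.

From mathcomp Require Import all_boot.
From mathcomp Require Import zify.
Set Implicit Arguments. Unset Strict Implicit.

(* Split both sides of a copy (X, Y) of K_{s+1,t+1} along A and its
   complement. K_{2,2}-freeness of G[A] makes X or Y meet A in at most one
   vertex, and likewise for the complement. Pigeonhole then puts s vertices of
   one side in one part and t vertices of the other side in the other part,
   a K_{s,t} in G(A,B). *)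

Lemma exists_subset_card (T : finType) (A : {set T}) k :
  k <= #|A| -> exists2 B : {set T}, B \subset A & #|B| = k.
Proof.
rewrite -bin_gt0 -cards_draws => /card_gt0P [B].
by rewrite inE => /andP [subBA /eqP cardB]; exists B.
Qed.

Lemma has_Kst_leq (V : finType) (e : rel V) s t (X Y : {set V}) :
  [disjoint X & Y] -> s <= #|X| -> t <= #|Y| ->
  {in X & Y, forall x y, e x y} -> has_Kst e s t.
Proof.
move=> dXY /exists_subset_card [X' subX' cardX'] /exists_subset_card [Y' subY' cardY'] eXY.
exists X', Y'; split=> //; first exact: disjointW subX' subY' dXY.
by move=> x y X'x Y'y; apply: eXY; [apply: (subsetP subX') | apply: (subsetP subY')].
Qed.

Lemma card_val_preimset (V : finType) (A X : {set V}) :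
  X \subset A -> #|val @^-1: X : {set {x : V | x \in A}}| = #|X|.
Proof.
move=> subXA; rewrite -(card_imset _ val_inj); congr #|pred_of_set _|.
apply/setP => x; apply/imsetP/idP => [[y] | Xx]; first by rewrite inE => Xy ->.
by exists (exist _ x (subsetP subXA x Xx)); rewrite ?inE.
Qed.

Lemma has_Kst_induced (V : finType) (e : rel V) s t (A X Y : {set V}) :
  X \subset A -> Y \subset A -> [disjoint X & Y] -> s <= #|X| -> t <= #|Y| ->
  {in X & Y, forall x y, e x y} -> has_Kst (induced e A) s t.
Proof.
move=> subXA subYA dXY leX leY eXY.
apply: (@has_Kst_leq _ _ _ _ (val @^-1: X) (val @^-1: Y)).
- by rewrite -setI_eq0 -preimsetI (disjoint_setI0 dXY) preimset0.
- by rewrite card_val_preimset.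
- by rewrite card_val_preimset.
- by move=> x y; rewrite !inE; apply: eXY.
Qed.

Lemma has_Kst_cross (V : finType) (e : rel V) s t (A B X Y : {set V}) :
  X \subset A -> Y \subset B -> [disjoint X & Y] -> s <= #|X| -> t <= #|Y| ->
  {in X & Y, forall x y, e x y} -> has_Kst (cross e A B) s t.
Proof.
move=> subXA subYB dXY leX leY eXY; apply: has_Kst_leq leX leY _ => // x y Xx Yy.
by rewrite /cross eXY // (subsetP subXA x Xx) (subsetP subYB y Yy).
Qed.

Lemma has_Kst_crossC (V : finType) (e : rel V) s t (A B : {set V}) :
  has_Kst (cross e B A) s t -> has_Kst (cross e A B) s t.
Proof.
case=> X [Y [dXY cardX cardY eXY]]; exists X, Y; split=> // x y Xx Yy.
by rewrite /cross orbC; apply: eXY.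
Qed.

Lemma partition_setC (V : finType) (A B : {set V}) :
  [disjoint A & B] -> A :|: B = [set: V] -> B = ~: A.
Proof.
move=> dAB coverAB; apply/setP => x; rewrite inE.
have : x \in A :|: B by rewrite coverAB inE.
by rewrite inE; case/orP => [Ax | Bx]; rewrite ?Ax ?(disjointFr dAB Ax) ?(disjointFl dAB Bx).
Qed.

Lemma split_parts_large s t xA xB yA yB :
  1 < s -> 1 < t -> xA + xB = s.+1 -> yA + yB = t.+1 ->
  ~~ ((1 < xA) && (1 < yA)) -> ~~ ((1 < xB) && (1 < yB)) ->
  (s <= xA) && (t <= yB) || (s <= xB) && (t <= yA).
Proof. lia. Qed.

Theorem lemma4p4 (s t : nat) (V : finType) (e : rel V) (A B : {set V}) :
  3 <= s -> s <= t ->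
  simple_graph e ->
  [disjoint A & B] -> A :|: B = [set: V] ->
  Kst_free (induced e A) 2 2 ->
  Kst_free (induced e B) 2 2 ->
  Kst_free (cross e A B) s t ->
  Kst_free e s.+1 t.+1.
Proof.
move=> s_ge3 le_st _ dAB coverAB K22freeA K22freeB Kfree [X [Y [dXY cardX cardY eXY]]].
rewrite (partition_setC dAB coverAB) in K22freeB Kfree.
have sub_pair (X' Y' : {set V}) : X' \subset X -> Y' \subset Y ->
    [disjoint X' & Y'] /\ {in X' & Y', forall x y, e x y}.
  move=> subX subY; split; first exact: disjointW subX subY dXY.
  by move=> x y X'x Y'y; apply: eXY; [apply: (subsetP subX) | apply: (subsetP subY)].
have [dA eA] := sub_pair _ _ (subsetIl X A) (subsetIl Y A).
have [dC eC] := sub_pair _ _ (subsetDl X A) (subsetDl Y A).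
have [dAC eAC] := sub_pair _ _ (subsetIl X A) (subsetDl Y A).
have [dCA eCA] := sub_pair _ _ (subsetDl X A) (subsetIl Y A).
have smallA : ~~ ((1 < #|X :&: A|) && (1 < #|Y :&: A|)).
  apply/andP => -[leX leY]; apply: K22freeA.
  exact: has_Kst_induced (subsetIr _ _) (subsetIr _ _) dA leX leY eA.
have smallC : ~~ ((1 < #|X :\: A|) && (1 < #|Y :\: A|)).
  apply/andP => -[leX leY]; apply: K22freeB.
  exact: has_Kst_induced (subsetDr _ _) (subsetDr _ _) dC leX leY eC.
have s_gt1 : 1 < s by lia.
have t_gt1 : 1 < t by lia.
have splitX : #|X :&: A| + #|X :\: A| = s.+1 by rewrite cardsID.
have splitY : #|Y :&: A| + #|Y :\: A| = t.+1 by rewrite cardsID.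
have := split_parts_large s_gt1 t_gt1 splitX splitY smallA smallC.
case/orP => /andP [leX leY]; apply: Kfree.
- exact: has_Kst_cross (subsetIr _ _) (subsetDr _ _) dAC leX leY eAC.
- exact/has_Kst_crossC/(has_Kst_cross (subsetDr _ _) (subsetIr _ _) dCA leX leY eCA).
Qed.
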